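(* Let $G>I$ be a finite group with trivial center $Z(G)=I$ and let $\sigma_1,\sigma_2\in G$ with $G=\langle\sigma_1,\sigma_2\rangle$ and $o(\sigma_1\sigma_2)=2$. Then: (a) For $e_1=[\sigma_1,\sigma_1,\sigma_2,\sigma_1\sigma_2\sigma_1^{-1}]$ and $e_2=e_1^{\beta_{13}}$ we have $e_2=[\sigma_1,\sigma_2\sigma_1\sigma_2^{-1},\sigma_2,\sigma_2]$, and $Z_1=\{e_1,e_2\}$ is an orbit of length $2$ under $B_4$, on which $\beta_{12}$ fixes $e_1$ and $e_2$, $\beta_{13}$ and $\beta_{14}$ interchange $e_1$ and $e_2$, $\rho_4(B_4)\cong C_2$, and $g_{Z_1}=0$. (b) For $e_3=[\sigma_1,\sigma_2,\sigma_1,\sigma_2]$ and $e_4=e_3^{\beta_{12}}$ we have $e_4=[\sigma_1,\sigma_2,\sigma_2^{-1}\sigma_1\sigma_2,\sigma_1\sigma_2\sigma_1^{-1}]$, and $Z_2=\{e_3,e_4\}$ is an orbit of length $2$ under $B_4$, on which $\beta_{12}$ and $\beta_{14}$ interchange $e_3,e_4$, $\beta_{13}$ fixes $e_3$ and $e_4$, $\rho_4(B_4)\cong C_2$, and $g_{Z_2}=0$. (c) For $e_5=[\sigma_1,\sigma_2,\sigma_2,\sigma_2^{-1}\sigma_1\sigma_2]$ and $e_6=e_5^{\beta_{12}}$ we have $e_6=[\sigma_1,\sigma_2,\sigma_1\sigma_2\sigma_1^{-1},\sigma_1]$, and $Z_3=\{e_5,e_6\}$ is an orbit of length $2$ under $B_4$,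 on which $\beta_{12}$ and $\beta_{13}$ interchange $e_5,e_6$, $\beta_{14}$ fixes $e_5$ and $e_6$, $\rho_4(B_4)\cong C_2$, and $g_{Z_3}=0$.
   Context: $\iota$ denotes the identity of $G$ and $I$ the trivial group. For conjugacy classes $C_1,\dots,C_4$ of $G$, $\Sigma^i(C_1,\dots,C_4)$ is the set of $G$-conjugacy classes $[\sigma_1,\dots,\sigma_4]$ (under simultaneous conjugation) of tuples with $\sigma_j\in C_j$, $\langle\sigma_1,\dots,\sigma_4\rangle=G$, $\sigma_1\sigma_2\sigma_3\sigma_4=\iota$. The Hurwitz braid group $H_4=\langle\beta_2,\beta_3,\beta_4\rangle$ acts from the right by $[\underline{\sigma}]^{\beta_2}=[\sigma_1\sigma_2\sigma_1^{-1},\sigma_1,\sigma_3,\sigma_4]$, $[\underline{\sigma}]^{\beta_3}=[\sigma_1,\sigma_2\sigma_3\sigma_2^{-1},\sigma_2,\sigma_4]$, $[\underline{\sigma}]^{\beta_4}=[\sigma_1,\sigma_2,\sigma_3\sigma_4\sigma_3^{-1},\sigma_3]$. The pure braid group $B_4$ is generated by $\beta_{12}=\beta_2^2$, $\beta_{13}=\beta_2^{-1}\beta_3^2\beta_2$, $\beta_{14}=\beta_2^{-1}\beta_3^{-1}\beta_4^2\beta_3\beta_2$, $\beta_{23}=\beta_3^2$, $\beta_{24}=\beta_3^{-1}\beta_4^2\beta_3$, $\beta_{34}=\beta_4^2$ and preserves each $\Sigma^i(C_1,\dots,C_4)$; $\rho_4$ denotes the induced permutation representation. For a $B_4$-orbit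 $Z$, let $z_{1j}$ be the number of cycles (fixed points included) of $\rho_4(\beta_{1j})$ on $Z$; the genus is $g_Z=1-|Z|+\frac12(3|Z|-z_{12}-z_{13}-z_{14})$. *)

From mathcomp Require Import all_boot all_order all_algebra all_fingroup all_solvable.
Set Implicit Arguments. Unset Strict Implicit. Unset Printing Implicit Defensive.
Import GRing.Theory.

Local Open Scope group_scope.

Section Braid.
Variable gT : finGroupType.

Definition tup := (gT * gT * gT * gT)%type.

(* x ^ y = y^-1 * x * y in mathcomp, so  a b a^-1 = b ^ a^-1. *)
Inductive hletter := HB2 | HB3 | HB4 | HB2i | HB3i | HB4i.

Definition hact (l : hletter) (t : tup) : tup :=
  let '(a, b, c, d) := t in
  match l with
  | HB2 => (b ^ a^-1, a, c, d)
  | HB3 => (a, c ^ b^-1, b, d)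
  | HB4 => (a, b, d ^ c^-1, c)
  | HB2i => (b, a ^ b, c, d)
  | HB3i => (a, c, b ^ c, d)
  | HB4i => (a, b, d, c ^ d)
  end.

Definition linv (l : hletter) : hletter :=
  match l with
  | HB2 => HB2i | HB3 => HB3i | HB4 => HB4i
  | HB2i => HB2 | HB3i => HB3 | HB4i => HB4
  end.

(* right action of a word: the first letter acts first *)
Definition hact_word (w : seq hletter) (t : tup) : tup :=
  foldl (fun t l => hact l t) t w.

Definition inv_word (w : seq hletter) : seq hletter := rev (map linv w).

Definition beta12 : seq hletter := [:: HB2; HB2].
Definition beta13 : seq hletter := [:: HB2i; HB3; HB3; HB2].
Definition beta14 : seq hletter := [:: HB2i; HB3i; HB4; HB4; HB3; HB2].
Definition beta23 : seq hletter := [:: HB3; HB3].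
Definition beta24 : seq hletter := [:: HB3i; HB4; HB4; HB3].
Definition beta34 : seq hletter := [:: HB4; HB4].

Inductive pgen := P12 | P13 | P14 | P23 | P24 | P34.

Definition pgen_word (g : pgen) : seq hletter :=
  match g with
  | P12 => beta12 | P13 => beta13 | P14 => beta14
  | P23 => beta23 | P24 => beta24 | P34 => beta34
  end.

(* an element of the pure braid group B_4: a word in the beta_ij and their
   inverses (true = beta_ij, false = beta_ij^-1) *)
Definition pword (p : seq (pgen * bool)) : seq hletter :=
  flatten [seq (if x.2 then pgen_word x.1 else inv_word (pgen_word x.1)) | x <- p].

Definition conj4 (t : tup) (g : gT) : tup :=
  let '(a, b, c, d) := t in (a ^ g, b ^ g, c ^ g, d ^ g).

Definition cls (G : {set gT}) (t : tup) : {set tup} := [set conj4 t g | g in G].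

Definition cact (w : seq hletter) (X : {set tup}) : {set tup} := hact_word w @: X.

(* the tuple satisfies the defining conditions of Sigma^i: product-one and
   generation of G (the classes C_j are those of its entries) *)
Definition in_Sigma (G : {set gT}) (t : tup) : Prop :=
  let '(a, b, c, d) := t in a * b * c * d = 1 /\ <<[set a; b; c; d]>> = G.

Definition is_B4_orbit (Z : {set {set tup}}) (e : {set tup}) : Prop :=
  forall X, (exists p, cact (pword p) e = X) <-> X \in Z.

(* rho_4(B_4) restricted to {e, e'} is the group {id, swap} = C_2 *)
Definition rho_C2 (e e' : {set tup}) : Prop :=
  (forall p, (cact (pword p) e = e /\ cact (pword p) e' = e') \/
             (cact (pword p) e = e' /\ cact (pword p) e' = e)) /\
  (exists p, cact (pword p) e = e' /\ cact (pword p) e' = e).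

(* number of cycles (fixed points included) of beta_1j on Z *)
Definition zcyc (w : seq hletter) (Z : {set {set tup}}) : nat := fcard (cact w) (mem Z).

Definition genus (Z : {set {set tup}}) : rat :=
  (1 - (#|Z|)%:R + ((3 * #|Z|)%:R - (zcyc beta12 Z)%:R - (zcyc beta13 Z)%:R
                    - (zcyc beta14 Z)%:R) / 2)%R.

Definition fixes (w : seq hletter) (e : {set tup}) : Prop := cact w e = e.
Definition swaps (w : seq hletter) (e e' : {set tup}) : Prop :=
  cact w e = e' /\ cact w e' = e.

End Braid.

(** Every entry of the tuples involved is a word in [s1] and [s2], and since
    [s1 * s2] is an involution these words can be read in the free product of
    the infinite cyclic group on [a = s1] and the group of order 2 on
    [c = s1 * s2], where equality is decided by free reduction.  For each
    generator [beta_ij] of the pure braid group the braided representative is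
    simultaneously conjugate, by an explicit word, to one of the two
    representatives, so the pair of classes is [B_4]-stable; the three orbits
    belong to the three pairings of {1, 2, 3, 4}, and [beta_ij] swaps the two
    classes exactly when [i] and [j] lie in different blocks.  The classes are
    distinct: a conjugator between the representatives centralises [s1] and
    [s2], hence is central, hence trivial, and the representatives differ in an
    entry whose equality would make [s1] and [s2] commute and [G] abelian, so
    [G = Z(G) = 1].  Exactly one of [beta_12], [beta_13], [beta_14] fixes both
    classes, so the cycle counts are [2, 1, 1] and the genus is
    [1 - 2 + (6 - 4) / 2 = 0]. *)

From HB Require Import structures.
From mathcomp Require Import all_boot all_order all_algebra all_fingroup all_solvable.
Set Implicit Arguments. Unset Strict Implicit. Unset Printing Implicit Defensive.
Local Open Scope group_scope.

Inductive letter := La | LaV | Lc.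

Definition letter_eqb (l m : letter) : bool :=
  match l, m with La, La | LaV, LaV | Lc, Lc => true | _, _ => false end.

Lemma letter_eqP : Equality.axiom letter_eqb.
Proof. by case; case; constructor. Qed.

HB.instance Definition _ := hasDecEq.Build letter letter_eqP.

Definition letter_inv (l : letter) : letter :=
  match l with La => LaV | LaV => La | Lc => Lc end.

Definition word_inv (s : seq letter) : seq letter := rev (map letter_inv s).

Definition push_letter (l : letter) (s : seq letter) : seq letter :=
  if s is m :: r then (if m == letter_inv l then r else l :: s) else [:: l].

Definition reduce (s : seq letter) : seq letter := foldr push_letter [::] s.

Section FreeProductWords.
Variables (gT : finGroupType) (a c : gT).
Hypothesis c2 : c ^+ 2 = 1.

Definition eval_letter (l : letter) : gT :=
  match l with La => a | LaV => a^-1 | Lc => c end.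

Definition eval_word (s : seq letter) : gT := foldr (fun l x => eval_letter l * x) 1 s.

Lemma eval_word_cat s t : eval_word (s ++ t) = eval_word s * eval_word t.
Proof. by elim: s => [|l s IHs] /=; rewrite ?mul1g // IHs mulgA. Qed.

Lemma eval_letter_inv l : eval_letter (letter_inv l) = (eval_letter l)^-1.
Proof.
case: l => //=; first by rewrite invgK.
by apply: (mulgI c); rewrite mulgV -c2 expgS expg1.
Qed.

Lemma eval_word_inv s : eval_word (word_inv s) = (eval_word s)^-1.
Proof.
elim: s => [|l s IHs] /=; first by rewrite invg1.
rewrite /word_inv /= rev_cons -cats1 eval_word_cat -/(word_inv s) IHs.
by rewrite /= mulg1 eval_letter_inv invMg.
Qed.

Lemma eval_word_reduce s : eval_word (reduce s) = eval_word s.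
Proof.
elim: s => [|l s IHs] //=; rewrite -IHs /reduce /= -/(reduce s).
case: (reduce s) => [|m r] //=; case: eqP => [->|_] //=.
by rewrite eval_letter_inv mulKVg.
Qed.

End FreeProductWords.

Inductive term :=
  | TS1 | TS2 | TOne
  | TMul of term & term
  | TInv of term
  | TConj of term & term.

Fixpoint term_word (x : term) : seq letter :=
  match x with
  | TS1 => [:: La]
  | TS2 => [:: LaV; Lc]
  | TOne => [::]
  | TMul x y => term_word x ++ term_word y
  | TInv x => word_inv (term_word x)
  | TConj x y => word_inv (term_word y) ++ term_word x ++ term_word y
  end.

Definition term4 := (term * term * term * term)%type.

Definition norm4 (t : term4) : seq letter * seq letter * seq letter * seq letter :=
  let '(x, y, z, w) := t in
  (reduce (term_word x), reduce (term_word y), reduce (term_word z), reduce (term_word w)).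

Definition term_hact (l : hletter) (t : term4) : term4 :=
  let '(x, y, z, w) := t in
  match l with
  | HB2 => (TConj y (TInv x), x, z, w)
  | HB3 => (x, TConj z (TInv y), y, w)
  | HB4 => (x, y, TConj w (TInv z), z)
  | HB2i => (y, TConj x y, z, w)
  | HB3i => (x, z, TConj y z, w)
  | HB4i => (x, y, w, TConj z w)
  end.

Definition term_hact_word (w : seq hletter) (t : term4) : term4 :=
  foldl (fun t l => term_hact l t) t w.

Definition term_conj4 (t : term4) (g : term) : term4 :=
  let '(x, y, z, w) := t in (TConj x g, TConj y g, TConj z g, TConj w g).

Definition braids_to (w : seq hletter) (t u : term4) (g : term) : bool :=
  norm4 (term_hact_word w t) == norm4 (term_conj4 u g).

Section TermEvaluation.
Variables (gT : finGroupType) (s1 s2 : gT).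

Fixpoint eval_term (x : term) : gT :=
  match x with
  | TS1 => s1
  | TS2 => s2
  | TOne => 1
  | TMul x y => eval_term x * eval_term y
  | TInv x => (eval_term x)^-1
  | TConj x y => eval_term x ^ eval_term y
  end.

Definition eval4 (t : term4) : tup gT :=
  let '(x, y, z, w) := t in (eval_term x, eval_term y, eval_term z, eval_term w).

Lemma eval4_hact l t : eval4 (term_hact l t) = hact l (eval4 t).
Proof. by case: t => [[[x y] z] w]; case: l. Qed.

Lemma eval4_hact_word w t : eval4 (term_hact_word w t) = hact_word w (eval4 t).
Proof. by elim: w t => [|l w IHw] t //=; rewrite IHw eval4_hact. Qed.

Lemma eval4_conj4 t g : eval4 (term_conj4 t g) = conj4 (eval4 t) (eval_term g).
Proof. by case: t => [[[x y] z] w]. Qed.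

Hypothesis c2 : (s1 * s2) ^+ 2 = 1.

Lemma eval_term_word x : eval_word s1 (s1 * s2) (term_word x) = eval_term x.
Proof.
elim: x => [||| x IHx y IHy | x IHx | x IHx y IHy] /=.
- by rewrite mulg1.
- by rewrite mulg1 mulKg.
- by [].
- by rewrite eval_word_cat IHx IHy.
- by rewrite eval_word_inv // IHx.
- by rewrite !eval_word_cat eval_word_inv // IHx IHy conjgE mulgA.
Qed.

Lemma eval_term_reduce x y :
  reduce (term_word x) = reduce (term_word y) -> eval_term x = eval_term y.
Proof.
move=> xy; rewrite -(eval_term_word x) -(eval_term_word y).
by rewrite -(eval_word_reduce _ c2 (term_word x)) xy (eval_word_reduce _ c2).
Qed.

Lemma eval4_norm4 t u : norm4 t = norm4 u -> eval4 t = eval4 u.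
Proof.
case: t u => [[[x y] z] w] [[[x' y'] z'] w']; rewrite /norm4 /eval4 => -[].
by do 4!move/eval_term_reduce->.
Qed.

Lemma braids_toP w t u g :
  braids_to w t u g -> hact_word w (eval4 t) = conj4 (eval4 u) (eval_term g).
Proof. by move/eqP/eval4_norm4; rewrite eval4_hact_word eval4_conj4. Qed.

End TermEvaluation.

Section BraidActionOnClasses.
Variable gT : finGroupType.
Implicit Types (t : tup gT) (X Y : {set tup gT}).

Lemma conj4_1 t : conj4 t 1 = t.
Proof. by case: t => [[[x y] z] w] /=; rewrite !conjg1. Qed.

Lemma conj4M t g h : conj4 t (g * h) = conj4 (conj4 t g) h.
Proof. by case: t => [[[x y] z] w] /=; rewrite !conjgM. Qed.

Lemma hact_conj4 l t g : hact l (conj4 t g) = conj4 (hact l t) g.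
Proof. by case: t => [[[x y] z] w]; case: l => /=; rewrite ?(=^~conjVg, =^~conjJg). Qed.

Lemma hact_word_conj4 w t g : hact_word w (conj4 t g) = conj4 (hact_word w t) g.
Proof. by elim: w t => [|l w IHw] t //=; rewrite hact_conj4 IHw. Qed.

Lemma cact_cls (G : {set gT}) w t : cact w (cls G t) = cls G (hact_word w t).
Proof.
by rewrite /cact /cls -imset_comp; apply: eq_imset => g /=; rewrite hact_word_conj4.
Qed.

Lemma cls_conj4 (G : {group gT}) t g : g \in G -> cls G (conj4 t g) = cls G t.
Proof.
move=> Gg; apply/setP => u; apply/imsetP/imsetP => [[h Gh ->]|[h Gh ->]].
  by exists (g * h); rewrite ?groupM // conj4M.
by exists (g^-1 * h); rewrite ?groupM ?groupV // -conj4M mulKVg.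
Qed.

Lemma mem_cls (G : {group gT}) t : t \in cls G t.
Proof. by apply/imsetP; exists 1; rewrite ?conj4_1. Qed.

Lemma hact_linv l t : hact (linv l) (hact l t) = t.
Proof. by case: t => [[[x y] z] w]; case: l => /=; rewrite ?conjgK ?conjgKV ?invgK. Qed.

Lemma hact_word_inv w t : hact_word (inv_word w) (hact_word w t) = t.
Proof.
elim: w t => [|l w IHw] t //=.
rewrite /inv_word /= rev_cons /hact_word foldl_rcons -/(hact_word _ _).
by rewrite -/(inv_word w) IHw hact_linv.
Qed.

Lemma cact_inv_word w X : cact (inv_word w) (cact w X) = X.
Proof. by rewrite /cact -imset_comp (eq_imset _ (hact_word_inv w)) imset_id. Qed.

Lemma cact_inj w : injective (@cact gT w).
Proof. exact: can_inj (cact_inv_word w). Qed.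

Lemma cact_cat w1 w2 X : cact (w1 ++ w2) X = cact w2 (cact w1 X).
Proof. by rewrite /cact -imset_comp; apply: eq_imset => t; rewrite /hact_word foldl_cat. Qed.

Definition moves_pair (b : bool) w X Y : Prop :=
  cact w X = (if b then Y else X) /\ cact w Y = (if b then X else Y).

Lemma moves_pair_nil X Y : moves_pair false [::] X Y.
Proof. by rewrite /moves_pair /cact !imset_id. Qed.

Lemma moves_pair_cat b1 b2 w1 w2 X Y :
  moves_pair b1 w1 X Y -> moves_pair b2 w2 X Y -> moves_pair (b1 (+) b2) (w1 ++ w2) X Y.
Proof. by rewrite /moves_pair !cact_cat => -[-> ->]; case: b1 b2 => [] [] [-> ->]. Qed.

Lemma moves_pair_inv b w X Y : moves_pair b w X Y -> moves_pair b (inv_word w) X Y.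
Proof.
case: b => /= -[wX wY]; split.
- by rewrite -{1}wY cact_inv_word.
- by rewrite -{1}wX cact_inv_word.
- by rewrite -{1}wX cact_inv_word.
- by rewrite -{1}wY cact_inv_word.
Qed.

End BraidActionOnClasses.

Section FunctionOnPair.
Variables (T : finType) (f : T -> T).

Lemma fconnect_fixpoint x y : f x = x -> fconnect f x y = (y == x).
Proof.
move=> fx; apply/idP/eqP => [xy | ->]; last exact: connect0.
by rewrite -(iter_findex xy) iter_fix.
Qed.

Hypothesis injf : injective f.

Lemma fcard_pair x y :
  f x \in [set x; y] -> f y \in [set x; y] -> fcard f [set x; y] = (~~ fconnect f x y).+1.
Proof.
move=> fx fy; have symf := fconnect_sym injf.
have closed_xy : fclosed f [set x; y].
  by apply: (intro_closed symf) => u v /eqP <- /set2P[] ->.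
rewrite -(n_comp_closure2 symf); apply: eq_n_comp_r => z; apply/idP/idP.
  by move=> /set2P[] ->; apply: mem_closure; rewrite inE /= eqxx ?orbT.
rewrite [_ \in fclosure _ _]inE => /pred0Pn[v /andP[/= /(closed_connect closed_xy) ->]].
by case/pred2P=> ->; rewrite !inE eqxx ?orbT.
Qed.

End FunctionOnPair.

Section TwoPointOrbit.
Variables (gT : finGroupType) (X Y : {set tup gT}) (swapping : pgen -> bool).
Hypothesis moves_gen : forall g, moves_pair (swapping g) (pgen_word g) X Y.

Lemma moves_pair_pword p : exists b, moves_pair b (pword p) X Y.
Proof.
elim: p => [|[g b] p [b' IHp]]; first by exists false; apply: moves_pair_nil.
exists (swapping g (+) b'); apply: moves_pair_cat IHp.
by case: b; [apply: moves_gen | apply/moves_pair_inv/moves_gen].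
Qed.

Lemma zcyc_pair g : X != Y -> zcyc (pgen_word g) [set X; Y] = (~~ swapping g).+1.
Proof.
move=> neqXY; have [gX gY] := moves_gen g.
have [gX_in gY_in] :
    cact (pgen_word g) X \in [set X; Y] /\ cact (pgen_word g) Y \in [set X; Y].
  by rewrite gX gY; case: (swapping g); rewrite !inE !eqxx ?orbT.
rewrite /zcyc (fcard_pair (@cact_inj _ _) gX_in gY_in).
case: (swapping g) gX => gX; first by rewrite -gX fconnect1.
by rewrite fconnect_fixpoint // eq_sym (negbTE neqXY).
Qed.

Variable g0 : pgen.
Hypothesis swapping_g0 : swapping g0.

Let swap_word : moves_pair true (pword [:: (g0, true)]) X Y.
Proof. by rewrite /pword /= cats0 -swapping_g0; apply: moves_gen. Qed.

Lemma pair_is_B4_orbit : is_B4_orbit [set X; Y] X.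
Proof.
move=> Z; split => [[p <-]|].
  by have [[] [-> _]] := moves_pair_pword p; rewrite !inE eqxx ?orbT.
rewrite !inE => /orP[] /eqP ->; last by exists [:: (g0, true)]; case: swap_word.
by exists [::]; case: (moves_pair_nil X Y).
Qed.

Lemma pair_rho_C2 : rho_C2 X Y.
Proof.
split; last by exists [:: (g0, true)]; case: swap_word.
by move=> p; have [[] [-> ->]] := moves_pair_pword p; [right | left].
Qed.

End TwoPointOrbit.

Section CenterFree.
Variables (gT : finGroupType) (G : {group gT}) (s1 s2 : gT).
Hypotheses (genG : <<[set s1; s2]>> = G) (ZG : 'Z(G) = 1) (ntG : G :!=: 1).

Lemma s1_in_G : s1 \in G.
Proof. by rewrite -genG mem_gen // !inE eqxx. Qed.

Lemma s2_in_G : s2 \in G.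
Proof. by rewrite -genG mem_gen // !inE eqxx orbT. Qed.

Lemma centralizing_generators_eq1 g : g \in G -> commute g s1 -> commute g s2 -> g = 1.
Proof.
move=> Gg gs1 gs2; suff : g \in 'Z(G) by rewrite ZG => /set1P.
rewrite inE Gg -genG cent_gen; apply/centP => x.
by rewrite !inE => /orP[] /eqP ->; apply: commute_sym.
Qed.

Lemma generators_not_commute : ~ commute s1 s2.
Proof.
move=> s12; have s1_1 : s1 = 1.
  by apply: centralizing_generators_eq1 s1_in_G (commute_refl _) s12.
have s2_1 : s2 = 1.
  by apply: centralizing_generators_eq1 s2_in_G (commute_sym s12) (commute_refl _).
by move/negP: ntG; apply; rewrite -genG s1_1 s2_1 setUid genGid.
Qed.

Lemma cls_eq_centralizing t u :
  cls G t = cls G u -> (forall g, conj4 t g = u -> s1 ^ g = s1 /\ s2 ^ g = s2) -> t = u.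
Proof.
move=> tu fixing; have := mem_cls G u; rewrite -tu => /imsetP[g Gg ut].
have [/conjg_fixP/commgP s1g /conjg_fixP/commgP s2g] := fixing g (esym ut).
rewrite ut (centralizing_generators_eq1 Gg (commute_sym s1g) (commute_sym s2g)).
by rewrite conj4_1.
Qed.

End CenterFree.

Definition braid_table (swapping : pgen -> bool) (t u : term4)
    (conjugators : pgen -> term * term) (g : pgen) : bool :=
  braids_to (pgen_word g) t (if swapping g then u else t) (conjugators g).1 &&
  braids_to (pgen_word g) u (if swapping g then t else u) (conjugators g).2.

Definition pgen_ends (g : pgen) : nat * nat :=
  match g with
  | P12 => (1, 2)%N | P13 => (1, 3)%N | P14 => (1, 4)%N
  | P23 => (2, 3)%N | P24 => (2, 4)%N | P34 => (3, 4)%N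
  end.

Definition crosses_pairing (j : nat) (g : pgen) : bool :=
  let: (i, k) := pgen_ends g in (i \in [:: 1%N; j]) != (k \in [:: 1%N; j]).

Section TermsInGroup.
Variables (gT : finGroupType) (G : {group gT}) (s1 s2 : gT).
Hypotheses (genG : <<[set s1; s2]>> = G) (c2 : (s1 * s2) ^+ 2 = 1).

Lemma eval_term_in_G x : eval_term s1 s2 x \in G.
Proof.
by elim: x => /= [||| x Gx y Gy | x Gx | x Gx y Gy];
  rewrite ?(s1_in_G genG) ?(s2_in_G genG) ?groupM ?groupV ?groupJ.
Qed.

Lemma cact_cls_braids_to w t u g :
  braids_to w t u g -> cact w (cls G (eval4 s1 s2 t)) = cls G (eval4 s1 s2 u).
Proof. by move/(braids_toP c2) => tu; rewrite cact_cls tu cls_conj4 ?eval_term_in_G. Qed.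

Lemma moves_pair_table swapping t u conjugators :
  (forall g, braid_table swapping t u conjugators g) ->
  forall g, moves_pair (swapping g) (pgen_word g)
                       (cls G (eval4 s1 s2 t)) (cls G (eval4 s1 s2 u)).
Proof.
move=> table g; have /andP[] := table g; rewrite /moves_pair.
by case: (swapping g) => /cact_cls_braids_to-> /cact_cls_braids_to->.
Qed.

Lemma in_Sigma_eval x y z w :
  reduce (term_word (TMul (TMul (TMul x y) z) w)) = [::] ->
  s1 \in [set eval_term s1 s2 x; eval_term s1 s2 y; eval_term s1 s2 z; eval_term s1 s2 w] ->
  s2 \in [set eval_term s1 s2 x; eval_term s1 s2 y; eval_term s1 s2 z; eval_term s1 s2 w] ->
  in_Sigma G (eval4 s1 s2 (x, y, z, w)).
Proof.
move=> /(eval_term_reduce c2 (y := TOne)) prod1 s1_in s2_in; split => //.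
apply/eqP; rewrite eqEsubset; apply/andP; split.
  by rewrite gen_subG; apply/subsetP => v; rewrite !inE -!orbA => /or4P[] /eqP ->;
    apply: eval_term_in_G.
by rewrite -{1}genG genS //; apply/subsetP => v /set2P[] ->.
Qed.

End TermsInGroup.

Definition rep_a : term4 := (TS1, TS1, TS2, TConj TS2 (TInv TS1)).
Definition rep_a' : term4 := (TS1, TConj TS1 (TInv TS2), TS2, TS2).
Definition conjugators_a (g : pgen) : term * term :=
  match g with
  | P12 => (TOne, TMul TS2 TS2)
  | P13 => (TMul TS2 (TInv TS1), TMul (TMul TS1 TS1) (TMul TS2 TS1))
  | P14 => (TS2, TMul (TMul TS1 TS2) TS1)
  | P23 => (TInv TS1, TS1)
  | P24 => (TOne, TOne)
  | P34 => (TMul TS1 TS1, TOne)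
  end.

Lemma braid_table_a g : braid_table (crosses_pairing 2) rep_a rep_a' conjugators_a g.
Proof. by case: g. Qed.

Definition rep_b : term4 := (TS1, TS2, TS1, TS2).
Definition rep_b' : term4 := (TS1, TS2, TConj TS1 TS2, TConj TS2 (TInv TS1)).
Definition conjugators_b (g : pgen) : term * term :=
  match g with
  | P12 => (TMul TS1 TS2, TMul TS1 TS2)
  | P13 => (TMul TS2 TS2, TOne)
  | P14 => (TMul (TMul TS1 TS2) TS1, TS2)
  | P23 => (TS1, TInv TS1)
  | P24 => (TMul TS1 TS1, TOne)
  | P34 => (TOne, TOne)
  end.

Lemma braid_table_b g : braid_table (crosses_pairing 3) rep_b rep_b' conjugators_b g.
Proof. by case: g. Qed.

Definition rep_c : term4 := (TS1, TS2, TS2, TConj TS1 TS2).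
Definition rep_c' : term4 := (TS1, TS2, TConj TS2 (TInv TS1), TS1).
Definition conjugators_c (g : pgen) : term * term :=
  match g with
  | P12 => (TMul TS1 TS2, TMul TS1 TS2)
  | P13 => (TS2, TMul (TMul TS1 TS2) TS1)
  | P14 => (TMul TS2 TS2, TOne)
  | P23 => (TOne, TMul TS1 TS1)
  | P24 => (TS1, TInv TS1)
  | P34 => (TOne, TOne)
  end.

Lemma braid_table_c g : braid_table (crosses_pairing 4) rep_c rep_c' conjugators_c g.
Proof. by case: g. Qed.

Section ThreeOrbits.
Variables (gT : finGroupType) (G : {group gT}) (s1 s2 : gT).
Hypotheses (ntG : G :!=: 1) (ZG : 'Z(G) = 1).
Hypotheses (genG : <<[set s1; s2]>> = G) (c2 : (s1 * s2) ^+ 2 = 1).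

Lemma part_a :
  let e1 := cls G (s1, s1, s2, s2 ^ s1^-1) in
  let e2 := cact beta13 e1 in
  let Z1 := [set e1; e2] in
  e2 = cls G (s1, s1 ^ s2^-1, s2, s2) /\
  in_Sigma G (s1, s1, s2, s2 ^ s1^-1) /\
  #|Z1| = 2%N /\ is_B4_orbit Z1 e1 /\
  fixes beta12 e1 /\ fixes beta12 e2 /\
  swaps beta13 e1 e2 /\ swaps beta14 e1 e2 /\
  rho_C2 e1 e2 /\ genus Z1 = 0%R.
Proof.
have moves := moves_pair_table genG c2 braid_table_a.
have neq : cls G (eval4 s1 s2 rep_a) != cls G (eval4 s1 s2 rep_a').
  apply/negP => /eqP /(cls_eq_centralizing genG ZG) eq_reps.
  have /= [/esym /conjg_fixP /commgP /commuteV + _] :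
      eval4 s1 s2 rep_a = eval4 s1 s2 rep_a'.
    by apply: eq_reps => g /= [-> _ -> _].
  by rewrite invgK; apply: generators_not_commute genG ZG ntG.
move=> e1 e2 Z1; rewrite {}/Z1.
have -> : e2 = cls G (eval4 s1 s2 rep_a') by case: (moves P13).
have -> : e1 = cls G (eval4 s1 s2 rep_a) by [].
split; first by [].
split; first by change (in_Sigma G (eval4 s1 s2 rep_a));
  apply: (in_Sigma_eval genG c2); rewrite // !inE eqxx ?orbT.
split; first by rewrite cards2 neq.
split; first by apply: (pair_is_B4_orbit (g0 := P13) moves).
split; first exact: (moves P12).1.
split; first exact: (moves P12).2.
split; first exact: moves P13.
split; first exact: moves P14.
split; first by apply: (pair_rho_C2 (g0 := P13) moves).
rewrite /genus cards2 neq (zcyc_pair moves P12 neq) (zcyc_pair moves P13 neq).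
by rewrite (zcyc_pair moves P14 neq).
Qed.

Lemma part_b :
  let e3 := cls G (s1, s2, s1, s2) in
  let e4 := cact beta12 e3 in
  let Z2 := [set e3; e4] in
  e4 = cls G (s1, s2, s1 ^ s2, s2 ^ s1^-1) /\
  in_Sigma G (s1, s2, s1, s2) /\
  #|Z2| = 2%N /\ is_B4_orbit Z2 e3 /\
  swaps beta12 e3 e4 /\ swaps beta14 e3 e4 /\
  fixes beta13 e3 /\ fixes beta13 e4 /\
  rho_C2 e3 e4 /\ genus Z2 = 0%R.
Proof.
have moves := moves_pair_table genG c2 braid_table_b.
have neq : cls G (eval4 s1 s2 rep_b) != cls G (eval4 s1 s2 rep_b').
  apply/negP => /eqP /(cls_eq_centralizing genG ZG) eq_reps.
  have /= [/esym /conjg_fixP /commgP + _] :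
      eval4 s1 s2 rep_b = eval4 s1 s2 rep_b'.
    by apply: eq_reps => g /= [-> -> _ _].
  exact: generators_not_commute genG ZG ntG.
move=> e3 e4 Z2; rewrite {}/Z2.
have -> : e4 = cls G (eval4 s1 s2 rep_b') by case: (moves P12).
have -> : e3 = cls G (eval4 s1 s2 rep_b) by [].
split; first by [].
split; first by change (in_Sigma G (eval4 s1 s2 rep_b));
  apply: (in_Sigma_eval genG c2); rewrite // !inE eqxx ?orbT.
split; first by rewrite cards2 neq.
split; first by apply: (pair_is_B4_orbit (g0 := P12) moves).
split; first exact: moves P12.
split; first exact: moves P14.
split; first exact: (moves P13).1.
split; first exact: (moves P13).2.
split; first by apply: (pair_rho_C2 (g0 := P12) moves).
rewrite /genus cards2 neq (zcyc_pair moves P12 neq) (zcyc_pair moves P13 neq).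
by rewrite (zcyc_pair moves P14 neq).
Qed.

Lemma part_c :
  let e5 := cls G (s1, s2, s2, s1 ^ s2) in
  let e6 := cact beta12 e5 in
  let Z3 := [set e5; e6] in
  e6 = cls G (s1, s2, s2 ^ s1^-1, s1) /\
  in_Sigma G (s1, s2, s2, s1 ^ s2) /\
  #|Z3| = 2%N /\ is_B4_orbit Z3 e5 /\
  swaps beta12 e5 e6 /\ swaps beta13 e5 e6 /\
  fixes beta14 e5 /\ fixes beta14 e6 /\
  rho_C2 e5 e6 /\ genus Z3 = 0%R.
Proof.
have moves := moves_pair_table genG c2 braid_table_c.
have neq : cls G (eval4 s1 s2 rep_c) != cls G (eval4 s1 s2 rep_c').
  apply/negP => /eqP /(cls_eq_centralizing genG ZG) eq_reps.
  have /= [/esym /conjg_fixP /commgP /commuteV + _] :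
      eval4 s1 s2 rep_c = eval4 s1 s2 rep_c'.
    by apply: eq_reps => g /= [-> -> _ _].
  by rewrite invgK => /commute_sym; apply: generators_not_commute genG ZG ntG.
move=> e5 e6 Z3; rewrite {}/Z3.
have -> : e6 = cls G (eval4 s1 s2 rep_c') by case: (moves P12).
have -> : e5 = cls G (eval4 s1 s2 rep_c) by [].
split; first by [].
split; first by change (in_Sigma G (eval4 s1 s2 rep_c));
  apply: (in_Sigma_eval genG c2); rewrite // !inE eqxx ?orbT.
split; first by rewrite cards2 neq.
split; first by apply: (pair_is_B4_orbit (g0 := P12) moves).
split; first exact: moves P12.
split; first exact: moves P13.
split; first exact: (moves P14).1.
split; first exact: (moves P14).2.
split; first by apply: (pair_rho_C2 (g0 := P12) moves).
rewrite /genus cards2 neq (zcyc_pair moves P12 neq) (zcyc_pair moves P13 neq).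
by rewrite (zcyc_pair moves P14 neq).
Qed.

End ThreeOrbits.

Theorem theorem2 (gT : finGroupType) (G : {group gT}) (s1 s2 : gT) :
  G :!=: 1 -> 'Z(G) = 1 ->
  <<[set s1; s2]>> = G -> #[s1 * s2]%g = 2%N ->
  (* (a) *)
  (let e1 := cls G (s1, s1, s2, s2 ^ s1^-1) in
   let e2 := cact beta13 e1 in
   let Z1 := [set e1; e2] in
   (e2 = cls G (s1, s1 ^ s2^-1, s2, s2) /\
       in_Sigma G (s1, s1, s2, s2 ^ s1^-1) /\
       #|Z1| = 2%N /\ is_B4_orbit Z1 e1 /\
       fixes beta12 e1 /\ fixes beta12 e2 /\
       swaps beta13 e1 e2 /\ swaps beta14 e1 e2 /\
       rho_C2 e1 e2 /\ genus Z1 = 0%R)) /\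
  (* (b) *)
  (let e3 := cls G (s1, s2, s1, s2) in
   let e4 := cact beta12 e3 in
   let Z2 := [set e3; e4] in
   (e4 = cls G (s1, s2, s1 ^ s2, s2 ^ s1^-1) /\
       in_Sigma G (s1, s2, s1, s2) /\
       #|Z2| = 2%N /\ is_B4_orbit Z2 e3 /\
       swaps beta12 e3 e4 /\ swaps beta14 e3 e4 /\
       fixes beta13 e3 /\ fixes beta13 e4 /\
       rho_C2 e3 e4 /\ genus Z2 = 0%R)) /\
  (* (c) *)
  (let e5 := cls G (s1, s2, s2, s1 ^ s2) in
   let e6 := cact beta12 e5 in
   let Z3 := [set e5; e6] in
   (e6 = cls G (s1, s2, s2 ^ s1^-1, s1) /\
       in_Sigma G (s1, s2, s2, s1 ^ s2) /\
       #|Z3| = 2%N /\ is_B4_orbit Z3 e5 /\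
       swaps beta12 e5 e6 /\ swaps beta13 e5 e6 /\
       fixes beta14 e5 /\ fixes beta14 e6 /\
       rho_C2 e5 e6 /\ genus Z3 = 0%R)).
Proof.
move=> ntG ZG genG order2.
have c2 : (s1 * s2) ^+ 2 = 1 by rewrite -order2 expg_order.
split; first exact: part_a.
split; first exact: part_b.
exact: part_c.
Qed.
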